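(* For every parity game $\mathcal{G}$, the algorithm $\mathtt{solve}(\mathcal{G})$ (defined in the context) solves $\mathcal{G}$: it terminates and returns $W_0,W_1,\sigma_0,\sigma_1$ such that $W_0\cup W_1=V$, $W_0\cap W_1=\emptyset$, and for each player $\alpha\in\{0,1\}$, $\sigma_\alpha$ is a strategy of player $\alpha$ such that every play starting in $W_\alpha$ and consistent with $\sigma_\alpha$ is won by $\alpha$ (so $W_\alpha$ is exactly the set of vertices won by $\alpha$).
   Context: Parity games: $\mathcal{G}=(V_0,V_1,E,\mathrm{pr})$, $V=V_0\cup V_1$ finite, partitioned into vertices of Even ($0$) and Odd ($1$); $E\subseteq V\times V$ with every vertex having a successor; $\mathrm{pr}:V\to\{0,\dots,d\}$. $E(u)=\{v:(u,v)\in E\}$, $\mathrm{pr}(U)=\max_{u\in U}\mathrm{pr}(u)$, $\mathrm{pr}^{-1}(p)$ the set of vertices of priority $p$, $\overline{\alpha}=1-\alpha$. A play (infinite path) is won by Even iff the highest priority occurring infinitely often is even, otherwise by Odd; a cycle is won by $\alpha$ if its highest priority has parity $\alpha$. A strategy of $\alpha$ is a partial function $\sigma$ on $V_\alpha$ with $\sigma(v)\in E(v)$; a play is consistent with $\sigma$ if every vertex $v\in\mathrm{dom}(\sigma)$ on it is followed by $\sigma(v)$. A vertex is won by $\alpha$ if $\alpha$ has a strategy all of whose consistent plays from it are won by $\alpha$. For $U\subseteq V$, $\mathcal{G}\cap U$ is the subgame with vertices $V\cap U$ and edges $E\cap(U\times U)$, and $\mathcal{G}\setminus U=\mathcal{G}\cap(V\setminus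 U)$. A $p$-tangle is a nonempty $U\subseteq V$ with $p=\mathrm{pr}(U)$ such that for $\alpha\equiv p\pmod 2$ there is a strategy $\sigma:U\cap V_\alpha\to U$ (witness strategy $\sigma_T(U)$) with $(U,E\cap(\sigma\cup((U\cap V_{\overline{\alpha}})\times U)))$ strongly connected and all its cycles won by $\alpha$ (''won by $\alpha$''). For a tangle $t$ won by $\alpha$ in a game with edge set $E$, $E_T(t)=\{v\notin t:\exists u\in t\cap V_{\overline{\alpha}},(u,v)\in E\}$. $T_\alpha$ denotes the tangles of $T$ won by $\alpha$; for a subgame $\mathcal{G}'$, $T\cap\mathcal{G}'$ denotes the tangles of $T$ contained in its vertex set. Standard attractor: $\mathit{Attr}^{\mathcal{G}}_\alpha(A)$ is the least $Z\supseteq A$ containing every $v\in V_\alpha$ with $E(v)\cap Z\neq\emptyset$ and every $v\in V_{\overline{\alpha}}$ with $E(v)\subseteq Z$, computed iteratively with a strategy $\sigma$ mapping each $\alpha$-vertex added to $Z$ to a successor already in $Z$ (and each $\alpha$-vertex of $A$ to a successor in $Z$ once one exists). Tangle attractor $\mathit{TAttr}^{\mathcal{G},T}_\alpha(A)$: the least $Z\supseteq A$ closed under the two rules above and additionally containing every vertex of every $t\in T_\alpha$ with $\emptyset\neq E_T(t)\subseteq Z$ ($E_T$ computed in $\mathcal{G}$); its strategy is built as for $\mathit{Attr}$, and when the vertices of a tangle $t$ are added, $\sigma(u):=\sigma_T(t)(u)$ for every $\alpha$-vertex $u\in t$ not yet in $\mathrm{dom}(\sigma)$. extract-tangles$(Z,\sigma)$,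 for a subgame $\mathcal{G}'=(V',E')$ with top priority $p$, $\alpha\equiv p$, region $Z\subseteq V'$ and strategy $\sigma$: let $Y_Z$ be the greatest $X\subseteq Z$ such that every $v\in X\cap V_{\overline{\alpha}}$ has $E'(v)\subseteq X$ and every $v\in X\cap V_\alpha$ has $\sigma(v)\in X$; let $H$ be the graph on $Y_Z$ with edges $(v,\sigma(v))$ for $v\in Y_Z\cap V_\alpha$ and $(v,w)\in E'$ for $v\in Y_Z\cap V_{\overline{\alpha}}$; return all bottom strongly connected components of $H$ that contain at least one edge of $H$, each with witness strategy $\sigma$ restricted to it. $\mathtt{search}(\mathcal{G},T)$: repeat forever: set $r:=\emptyset$ (a partial function $V\to\mathbb{N}$) and $Y:=\emptyset$; while $V\setminus\mathrm{dom}(r)\neq\emptyset$: let $\mathcal{G}':=\mathcal{G}\setminus\mathrm{dom}(r)$ with vertex set $V'$, $T':=T\cap\mathcal{G}'$, $p:=\mathrm{pr}(\mathcal{G}')$, $\alpha:=p\bmod 2$; compute $(Z,\sigma):=\mathit{TAttr}^{\mathcal{G}',T'}_\alpha(\mathrm{pr}^{-1}(p)\cap V')$; let $A:=$ extract-tangles$(Z,\sigma)$; if some $t\in A$ has $E_T(t)=\emptyset$ with $E_T$ computed in $\mathcal{G}$, return $(T\cup Y,t)$; otherwise set $r(v):=p$ for all $v\in Z$ and $Y:=Y\cup A$. After the while-loop, set $T:=T\cup Y$. $\mathtt{solve}(\mathcal{G})$: set $W_0=W_1=\emptyset$, $\sigma_0=\sigma_1=\emptyset$, $T=\emptyset$;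 while $\mathcal{G}$ has a vertex: $(T,d):=\mathtt{search}(\mathcal{G},T)$; $\alpha:=\mathrm{pr}(d)\bmod 2$; $(D,\sigma):=\mathit{Attr}^{\mathcal{G}}_\alpha(d)$; $W_\alpha:=W_\alpha\cup D$; $\sigma_\alpha:=\sigma_\alpha\cup\sigma_T(d)\cup\sigma$; $\mathcal{G}:=\mathcal{G}\setminus D$; $T:=$ the tangles of $T$ contained in the remaining vertex set. Finally return $W_0,W_1,\sigma_0,\sigma_1$. *)

From mathcomp Require Import all_boot.
Set Implicit Arguments. Unset Strict Implicit. Unset Printing Implicit Defensive.

(* Players are booleans: false = Even (0), true = Odd (1).
   owner v = true  <->  v \in V_1.  The parity of priority p is odd p. *)
Record game (V : finType) := Game {
  owner : V -> bool;
  edge  : rel V;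
  prio  : V -> nat }.

Definition strat (V : finType) := V -> option V.

Record tangle (V : finType) := Tangle { tverts : {set V}; tstrat : strat V }.

Section Algorithm.
Variable V : finType.
Variable G : game V.
(* arbitrary choice function, used to resolve the choice of "a successor
   already in Z" in attractor computations *)
Variable sel : {set V} -> V.

Definition prmax (U : {set V}) : nat := \max_(v in U) prio G v.
Definition tparity (t : tangle V) : bool := odd (prmax (tverts t)).

Definition escapes (S : {set V}) (t : tangle V) : {set V} :=
  [set v in S | (v \notin tverts t) &&
     [exists u in tverts t, (owner G u == ~~ tparity t) && edge G u v]].

Definition succ_in (S Z : {set V}) (v : V) : {set V} :=
  [set w in S | edge G v w && (w \in Z)].

Definition std_step (S : {set V}) (a : bool) (zs : {set V} * strat V)
  : {set V} * strat V :=
  let: (Z, s) := zs in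
  let Z' := Z :|: [set v in S | if owner G v == a then succ_in S Z v != set0
                   else [forall w in S, edge G v w ==> (w \in Z)]] in
  (Z', fun v => if s v is Some w then Some w else
        if (owner G v == a) && (v \in Z') && (succ_in S Z v != set0)
        then Some (sel (succ_in S Z v)) else None).

Definition tangle_step (S : {set V}) (a : bool) (T : seq (tangle V))
  (zs : {set V} * strat V) : {set V} * strat V :=
  foldl (fun (zs : {set V} * strat V) (t : tangle V) =>
     let: (Z, s) := zs in
     if [&& tparity t == a, tverts t \subset S, ~~ (tverts t \subset Z),
            escapes S t != set0 & escapes S t \subset Z]
     then (Z :|: tverts t, fun v => if s v is Some w then Some w else
             if (v \in tverts t) && (owner G v == a) then tstrat t v else None)
     else (Z, s)) zs T.

(* tangle attractor TAttr^{S,T}_a(A) in the subgame S, with its strategy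
   (iterated enough times to reach the least fixpoint) *)
Definition tattr (S : {set V}) (a : bool) (T : seq (tangle V)) (A : {set V})
  : {set V} * strat V :=
  iter #|V|.+2 (fun zs => tangle_step S a T (std_step S a zs))
       (A, fun _ => None).

Definition attr (S : {set V}) (a : bool) (A : {set V}) := tattr S a [::] A.

Definition ystep (S : {set V}) (a : bool) (s : strat V) (X : {set V}) : {set V} :=
  [set v in X | if owner G v == a then (if s v is Some w then w \in X else false)
                else [forall w in S, edge G v w ==> (w \in X)]].

(* greatest such X contained in Z *)
Definition Yz (S : {set V}) (a : bool) (Z : {set V}) (s : strat V) : {set V} :=
  iter #|V|.+1 (ystep S a s) Z.

Definition hrel (S : {set V}) (a : bool) (s : strat V) (Y : {set V}) : rel V :=
  fun x y => [&& x \in Y, y \in Y &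
     if owner G x == a then s x == Some y else edge G x y && (y \in S)].

Definition extract (S : {set V}) (a : bool) (Z : {set V}) (s : strat V)
  : seq (tangle V) :=
  let Y := Yz S a Z s in
  let h := hrel S a s Y in
  let comp v := [set w | connect h v w && connect h w v] in
  let bottom v := [forall w, connect h v w ==> connect h w v] in
  let cs := undup [seq comp v | v <- enum Y &
                    bottom v && [exists x in comp v, exists y in comp v, h x y]] in
  [seq Tangle C (fun u => if u \in C then s u else None) | C <- cs].

Inductive sres := Found of seq (tangle V) & tangle V | Done of seq (tangle V).

(* the inner while-loop of search(S, T); R = dom(r); fuel n *)
Fixpoint inner (S : {set V}) (n : nat) (T : seq (tangle V)) (R : {set V})
  (Y : seq (tangle V)) : option sres :=
  match n with
  | 0 => None
  | n'.+1 =>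
    let S' := S :\: R in
    if S' == set0 then Some (Done Y) else
    let T' := [seq t <- T | tverts t \subset S'] in
    let p := prmax S' in
    let a := odd p in
    let: (Z, s) := tattr S' a T' [set v in S' | prio G v == p] in
    let A := extract S' a Z s in
    match [seq t <- A | escapes S t == set0] with
    | t :: _ => Some (Found (T ++ Y) t)
    | [::] => inner S n' T (R :|: Z) (Y ++ A)
    end
  end.

Fixpoint search (n : nat) (S : {set V}) (T : seq (tangle V))
  : option (seq (tangle V) * tangle V) :=
  match n with
  | 0 => None
  | n'.+1 =>
    match inner S n T set0 [::] with
    | None => None
    | Some (Found T' t) => Some (T', t)
    | Some (Done Y) => search n' S (T ++ Y)
    end
  end.

Record result := Result { W0 : {set V}; W1 : {set V}; s0 : strat V; s1 : strat V }.

Definition sunion (f g : strat V) : strat V :=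
  fun v => if f v is Some w then Some w else g v.

Fixpoint solve_loop (n : nat) (S : {set V}) (T : seq (tangle V))
  (W : bool -> {set V}) (sg : bool -> strat V) : option result :=
  match n with
  | 0 => None
  | n'.+1 =>
    if S == set0 then Some (Result (W false) (W true) (sg false) (sg true)) else
    match search n S T with
    | None => None
    | Some (T', d) =>
      let a := tparity d in
      let: (D, s) := attr S a (tverts d) in
      let W' := fun b => if b == a then W b :|: D else W b in
      let sg' := fun b => if b == a then sunion (sg b) (sunion (tstrat d) s)
                          else sg b in
      let S' := S :\: D in
      solve_loop n' S' [seq t <- T' | tverts t \subset S'] W' sg'
    end
  end.

(* solve(G) run with fuel n: None means "not finished within fuel n" *)
Definition solve (n : nat) : option result :=
  solve_loop n setT [::] (fun _ => set0) (fun _ _ => None).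

Definition is_strategy (a : bool) (s : strat V) : Prop :=
  forall v w, s v = Some w -> owner G v = a /\ edge G v w.

Definition play (p : nat -> V) : Prop := forall i, edge G (p i) (p i.+1).

Definition consistent (s : strat V) (p : nat -> V) : Prop :=
  forall i w, s (p i) = Some w -> p i.+1 = w.

(* the highest priority occurring infinitely often has parity a *)
Definition won_by (a : bool) (p : nat -> V) : Prop :=
  exists m, odd m = a /\
    (forall N, exists2 i, N <= i & prio G (p i) = m) /\
    (exists N, forall i, N <= i -> prio G (p i) <= m).

Definition wins_from (a : bool) (s : strat V) (v : V) : Prop :=
  forall p, play p -> p 0 = v -> consistent s p -> won_by a p.

Definition won_vertex (a : bool) (v : V) : Prop :=
  exists s, is_strategy a s /\ wins_from a s v.

Definition solution (r : result) : Prop :=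
  [/\ W0 r :|: W1 r = setT, W0 r :&: W1 r = set0,
      is_strategy false (s0 r) /\ is_strategy true (s1 r),
      (forall v, v \in W0 r -> wins_from false (s0 r) v) /\
      (forall v, v \in W1 r -> wins_from true (s1 r) v) &
      (forall v, v \in W0 r <-> won_vertex false v) /\
      (forall v, v \in W1 r <-> won_vertex true v)].
End Algorithm.

(* Every region the algorithm builds comes with a strategy all of whose cycles
   are won by the region's player.  For the tangle attractor towards the top
   priority [p] this is an invariant: a new cycle either passes through a
   vertex of priority [p] or stays inside a recorded tangle of parity [p].
   Hence every bottom component extracted by [search] is a tangle, and one
   without escapes in the current game is a dominion.  A play from the
   attractor of a dominion that follows the combined strategies either
   enters a region already won by the same player or moves forever along
   edges whose cycles are all won, so it is won.  A round of [search] that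
   finds no dominion records a tangle with a new vertex set (all vertices
   attracted means a bottom component exists), which bounds the number of
   rounds; each dominion removes vertices, which bounds [solve].  The two
   regions are exactly the winning regions because no play can be won by
   both players. *)

From Pilot Require Import Defs.
From mathcomp Require Import all_boot zify.
From Stdlib Require Import Classical ClassicalEpsilon.
From Stdlib Require List.
Set Implicit Arguments. Unset Strict Implicit. Unset Printing Implicit Defensive.

Definition asbool (P : Prop) : bool :=
  if excluded_middle_informative P then true else false.

Lemma asboolP (P : Prop) : reflect P (asbool P).
Proof. by rewrite /asbool; case: excluded_middle_informative => H; constructor. Qed.

Lemma In_map_mem (A : Type) (T : eqType) (f : T -> A) (s : seq T) y :
  List.In y (map f s) -> exists2 x, x \in s & y = f x.
Proof.
elim: s => [|x s IH] //= [<-|/IH[z zs ->]]; first by exists x; rewrite ?mem_head.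
by exists z; rewrite // inE zs orbT.
Qed.

Section Plays.
Variables (V : finType) (G : game V).

Definition maxprio (s : seq V) : nat := \max_(v <- s) prio G v.

Lemma maxprio_ub v s : v \in s -> prio G v <= maxprio s.
Proof. by move=> vs; apply: (@leq_bigmax_seq _ s xpredT). Qed.

Lemma maxprio_lub s m : (forall v, v \in s -> prio G v <= m) -> maxprio s <= m.
Proof. by move=> H; apply/bigmax_leqP_seq => v vs _; apply: H. Qed.

Definition closed_walk (e : rel V) (x : V) (s : seq V) : bool :=
  [&& s != [::], path e x s & last x s == x].

Definition cycles_won (e : rel V) (a : bool) : Prop :=
  forall x s, closed_walk e x s -> odd (maxprio (x :: s)) = a.

Definition restr (P : pred V) (e : rel V) : rel V :=
  [rel x y | [&& P x, P y & e x y]].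

Lemma sub_in_closed_walk (P : pred V) (e e' : rel V) x s :
  {in P &, subrel e e'} -> all P (x :: s) -> closed_walk e x s -> closed_walk e' x s.
Proof.
move=> ee' AP /and3P[ne p l]; rewrite /closed_walk ne l andbT.
exact: (sub_in_path ee' AP p).
Qed.

Lemma sub_cycles_won (e e' : rel V) a :
  subrel e e' -> cycles_won e' a -> cycles_won e a.
Proof.
move=> ee' H x s /and3P[ne p l]; apply: H.
by rewrite /closed_walk ne l (sub_path ee' p).
Qed.

Lemma closed_walk_in (P : pred V) (e : rel V) x s :
  (forall u v, e u v -> P u && P v) -> closed_walk e x s -> all P (x :: s).
Proof.
move=> eP /and3P[]; case: s => [|y s] //= _ /andP[exy ps] _.
case/andP: (eP _ _ exy) => -> Py /=; clear exy; elim: s y Py ps => [|z s IH] y Py /=.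
  by rewrite Py.
by case/andP=> eyz ps; rewrite Py; apply: IH ps; case/andP: (eP _ _ eyz).
Qed.

Lemma closed_walk_restr (P : pred V) (e : rel V) x s :
  all P (x :: s) -> closed_walk e x s -> closed_walk (restr P e) x s.
Proof. by apply: sub_in_closed_walk => u v Pu Pv euv; apply/and3P. Qed.

Section Propagation.
Variables (e : rel V) (P Q : pred V).
Hypothesis eP : forall u v, e u v -> Q u -> Q v -> P u -> P v.

Lemma path_all_forward x s : path e x s -> all Q (x :: s) -> P x -> all P (x :: s).
Proof.
elim: s x => [|y s IH] x /=; first by move=> _ _ ->.
case/andP=> exy ps /and3P[Qx Qy Qs] Px; rewrite Px /=.
apply: IH => //=; first by rewrite Qy.
exact: eP exy Qx Qy Px.
Qed.

Lemma path_last_forward x s y :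
  path e x s -> all Q (x :: s) -> y \in x :: s -> P y -> P (last x s).
Proof.
elim: s x y => [|z s IH] x y /=; first by move=> _ _; rewrite inE => /eqP ->.
case/andP=> exz ps /and3P[Qx Qz Qs]; rewrite inE => /orP[/eqP -> Px|ys Py].
  apply: (IH z z) => //=; rewrite ?Qz ?mem_head //.
  exact: eP exz Qx Qz Px.
by apply: (IH z y) => //=; rewrite Qz.
Qed.

Lemma closed_walk_all x s y :
  closed_walk e x s -> all Q (x :: s) -> y \in x :: s -> P y -> all P (x :: s).
Proof.
case/and3P=> _ ps /eqP lx AQ ys Py; apply: path_all_forward => //.
by rewrite -{1}lx; exact: path_last_forward ps AQ ys Py.
Qed.
End Propagation.

Fixpoint segment (p : nat -> V) (i n : nat) : seq V :=
  if n is n'.+1 then p i.+1 :: segment p i.+1 n' else [::].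

Lemma segment_path (e : rel V) p i n :
  (forall k, i <= k < i + n -> e (p k) (p k.+1)) -> path e (p i) (segment p i n).
Proof.
elim: n i => [|n IH] i //= H; rewrite H /=; last by lia.
by apply: IH => k Hk; apply: H; lia.
Qed.

Lemma last_segment p i n : last (p i) (segment p i n) = p (i + n).
Proof. by elim: n i => [|n IH] i /=; rewrite ?addn0 // IH addSnnS. Qed.

Lemma segmentP p i n v :
  v \in p i :: segment p i n -> exists2 k, i <= k <= i + n & v = p k.
Proof.
elim: n i => [|n IH] i /=.
  by rewrite inE => /eqP ->; exists i => //; lia.
rewrite inE => /orP[/eqP ->|/IH[k Hk ->]]; first by exists i => //; lia.
by exists k => //; lia.
Qed.

Lemma closed_walk_segment (e : rel V) p i j :
  i < j -> p i = p j -> (forall k, i <= k < j -> e (p k) (p k.+1)) ->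
  closed_walk e (p i) (segment p i (j - i)).
Proof.
move=> ij pij He; rewrite /closed_walk last_segment subnKC; last exact: ltnW.
rewrite -pij eqxx andbT; have ji : 0 < j - i by rewrite subn_gt0.
apply/andP; split; first by case: (j - i) ji.
by apply: segment_path => k; rewrite subnKC ?(ltnW ij) // => /He.
Qed.

Definition inf_often (p : nat -> V) (v : V) : Prop :=
  forall N, exists2 i, N <= i & p i = v.

Lemma eventually_inf_often p : exists N, forall i, N <= i -> inf_often p (p i).
Proof.
suff [N HN] : exists N, forall v : V, v \in enum V ->
    inf_often p v \/ forall i, N <= i -> p i != v.
  exists N => i Ni; case: (HN (p i)); rewrite ?mem_enum // => /(_ i Ni).
  by rewrite eqxx.
elim: (enum V) => [|x l [N HN]]; first by exists 0.
case: (classic (inf_often p x)) => Hx.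
  by exists N => v; rewrite inE => /orP[/eqP ->|]; [left|exact: HN].
have [M HM] : exists M, forall i, M <= i -> p i != x.
  apply: NNPP => H1; apply: Hx => M; apply: NNPP => H2; apply: H1.
  by exists M => i Mi; apply/eqP => E; apply: H2; exists i.
exists (maxn N M) => v; rewrite inE => /orP[/eqP ->|/HN[H|H]].
- by right => i Hi; apply: HM; lia.
- by left.
- by right => i Hi; apply: H; lia.
Qed.

(* The highest priority seen infinitely often is the top priority of a closed
   walk between two late occurrences of a vertex carrying it. *)
Lemma won_by_cycles (e : rel V) a p N :
  cycles_won e a -> (forall i, N <= i -> e (p i) (p i.+1)) -> won_by G a p.
Proof.
move=> won He; have [N0 HN0] := eventually_inf_often p.
pose N1 := maxn N N0; pose I := [set v | asbool (inf_often p v)].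
have pI i : N1 <= i -> p i \in I by move=> Hi; rewrite inE; apply/asboolP/HN0; lia.
have [x xI Ex] : {x | x \in I & \max_(v in I) prio G v = prio G x}.
  by apply: eq_bigmax_cond; apply/card_gt0P; exists (p N1); apply: pI.
have xinf : inf_often p x by move: xI; rewrite inE => /asboolP.
have ub i : N1 <= i -> prio G (p i) <= prio G x.
  by move=> Hi; rewrite -Ex; apply: leq_bigmax_cond; apply: pI.
exists (prio G x); split; last split.
- have [i1 Hi1 E1] := xinf N1; have [i2 Hi2 E2] := xinf i1.+1.
  have cw : closed_walk e (p i1) (segment p i1 (i2 - i1)).
    by apply: closed_walk_segment; rewrite ?E1 ?E2 //; move=> k Hk; apply: He; lia.
  rewrite -(won _ _ cw) E1; congr odd; apply/eqP; rewrite eqn_leq.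
  rewrite maxprio_ub ?mem_head //=; apply: maxprio_lub => v.
  by rewrite -{1}E1 => /segmentP[k Hk ->]; apply: ub; lia.
- by move=> M; have [k Hk Ek] := xinf M; exists k; rewrite ?Ek.
- by exists N1.
Qed.

Lemma won_by_shift a p i : won_by G a (fun k => p (i + k)) -> won_by G a p.
Proof.
case=> m [Hm [Hinf [N HN]]]; exists m; split => //; split.
  by move=> M; have [k Hk Ek] := Hinf M; exists (i + k) => //; lia.
exists (i + N) => j Hj; have := HN (j - i); rewrite subnKC; last lia.
by apply; lia.
Qed.

Lemma won_by_both p : won_by G false p -> won_by G true p -> False.
Proof.
case=> m0 [o0 [I0 [N0 H0]]] [m1 [o1 [I1 [N1 H1]]]].
have [k0 Hk0 E0] := I0 (maxn N0 N1); have [k1 Hk1 E1] := I1 (maxn N0 N1).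
have : m0 <= m1 by rewrite -E0; apply: H1; lia.
have : m1 <= m0 by rewrite -E1; apply: H0; lia.
move=> ? ?; have E : m0 = m1 by lia.
by move: o0; rewrite E o1.
Qed.

Lemma wins_from_both (f g : strat V) v :
  (forall u, exists w, edge G u w) ->
  is_strategy G false f -> is_strategy G true g ->
  wins_from G false f v -> wins_from G true g v -> False.
Proof.
move=> total sf sg Wf Wg.
pose next u := if (if owner G u then g u else f u) is Some w then w
               else odflt u [pick w | edge G u w].
have next_edge u : edge G u (next u).
  rewrite /next; case: ifP => ou; [case E: (g u) => [w|] | case E: (f u) => [w|]];
    try by [case: (sg _ _ E) | case: (sf _ _ E)];
    by case: pickP => [//|H]; case: (total u) => w; rewrite H.
pose p k := iter k next v.
have pl : play G p by move=> i; rewrite /p iterS; apply: next_edge.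
apply: (@won_by_both p); [apply: Wf | apply: Wg] => // i w E;
  rewrite /p iterS -/(p i) /next.
- by case: (sf _ _ E) => -> _; rewrite E.
- by case: (sg _ _ E) => -> _; rewrite E.
Qed.

End Plays.

Lemma iter_grow_fixpoint (V : finType) (X : Type) (f : X -> X) (set_of : X -> {set V})
    (I P : X -> Prop) x0 n :
  I x0 -> (forall x, I x -> I (f x) /\ set_of x \subset set_of (f x)) ->
  (forall x, I x -> set_of (f x) = set_of x -> P (f x)) ->
  (forall x, I x -> P x -> set_of (f x) = set_of x) ->
  #|V| < n -> P (iter n f x0).
Proof.
move=> I0 If Pfix fixP; have Ik k : I (iter k f x0) by elim: k => //= k /If[].
have grow k : P (iter k.+1 f x0) \/ k < #|set_of (iter k.+1 f x0)|.
  elim: k => [|k IH].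
    have [_ sub] := If _ I0; case: (eqVneq (set_of (f x0)) (set_of x0)) => E.
      by left; apply: Pfix.
    right; apply: leq_ltn_trans (leq0n #|set_of x0|) (proper_card _).
    by rewrite properEneq eq_sym E sub.
  case: IH => [Pk|lt]; first by left; rewrite iterS; apply: Pfix (Ik _) (fixP _ (Ik _) Pk).
  rewrite [iter k.+2 _ _]iterS; have [_ sub] := If _ (Ik k.+1).
  case: (eqVneq (set_of (f (iter k.+1 f x0))) (set_of (iter k.+1 f x0))) => E.
    by left; apply: Pfix.
  right; apply: leq_ltn_trans lt (proper_card _).
  by rewrite properEneq eq_sym E sub.
case: n => // n ltn; case: (grow n) => // lt.
by have := max_card (set_of (iter n.+1 f x0)); lia.
Qed.

Section Attractor.
Variables (V : finType) (G : game V) (sel : {set V} -> V).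
Hypothesis sel_in : forall A : {set V}, A != set0 -> sel A \in A.
Implicit Types (S A Z : {set V}) (a : bool) (s : strat V) (t : tangle V)
  (T : seq (tangle V)) (zs : {set V} * strat V).

Definition tangle_rel (t : tangle V) : rel V := fun x y =>
  [&& x \in tverts t, y \in tverts t &
      if owner G x == tparity G t then tstrat t x == Some y else edge G x y].

Definition is_tangle (t : tangle V) : Prop :=
  [/\ tverts t != set0,
      (forall v w, tstrat t v = Some w ->
         [/\ v \in tverts t, owner G v = tparity G t, edge G v w & w \in tverts t]),
      (forall v, v \in tverts t -> owner G v = tparity G t -> tstrat t v != None) &
      cycles_won G (tangle_rel t) (tparity G t)].

Definition tangles_ok (T : seq (tangle V)) (a : bool) : Prop :=
  forall t, List.In t T -> tparity G t = a -> is_tangle t.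

Definition attr_le (zs zs' : {set V} * strat V) : Prop :=
  zs.1 \subset zs'.1 /\ forall v w, zs.2 v = Some w -> zs'.2 v = Some w.

Lemma attr_le_refl zs : attr_le zs zs.
Proof. by split. Qed.

Lemma attr_le_trans zs1 zs2 zs3 : attr_le zs1 zs2 -> attr_le zs2 zs3 -> attr_le zs1 zs3.
Proof. by case=> s12 e12 [s23 e23]; split=> [|v w /e12/e23//]; apply: subset_trans s23. Qed.

(* The vertices of A are exempt: the strategy need not be defined on them and
   only cycles avoiding A are controlled. *)
Definition attr_inv (S : {set V}) (a : bool) (A : {set V}) (zs : {set V} * strat V) :=
  let: (Z, s) := zs in
  [/\ A \subset Z /\ Z \subset S,
      (forall v w, s v = Some w -> [/\ v \in Z, owner G v = a, edge G v w & w \in Z]),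
      (forall v, v \in Z -> v \notin A -> owner G v = a -> s v != None),
      (forall v w, v \in Z -> v \notin A -> owner G v != a -> w \in S -> edge G v w ->
         w \in Z) &
      cycles_won G (restr [predC A] (hrel G S a s Z)) a].

Definition attr_closed (S : {set V}) (a : bool) (T : seq (tangle V))
    (zs : {set V} * strat V) :=
  let: (Z, s) := zs in
  [/\ (forall v, v \in S -> owner G v = a -> succ_in G S Z v != set0 ->
         v \in Z /\ s v != None),
      (forall v, v \in S -> owner G v != a -> [forall w in S, edge G v w ==> (w \in Z)] ->
         v \in Z) &
      (forall t, List.In t T -> tparity G t = a -> tverts t \subset S ->
         escapes G S t != set0 -> escapes G S t \subset Z -> tverts t \subset Z)].

Lemma hrel_in S a s Z u v : hrel G S a s Z u v -> (u \in Z) && (v \in Z).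
Proof. by case/and3P=> -> ->. Qed.

Lemma attr_inv_init S a A :
  A \subset S -> attr_inv S a A (A, fun _ => None).
Proof.
move=> AS; split=> //; first by move=> v ->.
- by move=> v w ->.
move=> x s /and3P[]; case: s => [|y s] //= _ /andP[/and3P[/= xA _ /and3P[xA' _ _]] _].
by rewrite xA' in xA.
Qed.

Lemma attr_inv_hrel S a A Z s zs u v :
  attr_inv S a A (Z, s) -> attr_le (Z, s) zs ->
  u \in Z -> u \notin A -> hrel G S a zs.2 zs.1 u v -> hrel G S a s Z u v.
Proof.
case=> _ I2 I3 I4 _ [_ le] uZ uA /and3P[_ _]; rewrite /hrel uZ /=.
case: ifP => [/eqP oa /eqP E|/negbT oa /andP[e vS]]; last by rewrite e vS (I4 u v).
case E': (s u) => [w|]; last by have := I3 u uZ uA oa; rewrite E'.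
have [_ _ _ wZ] := I2 _ _ E'.
by move: (le _ _ E'); rewrite E => -[->]; rewrite wZ eqxx.
Qed.

(* A cycle of the larger attractor graph that meets the old region stays in
   it, so it was already a cycle of the old graph. *)
Lemma attr_inv_cycle_old S a A Z s zs x c :
  attr_inv S a A (Z, s) -> attr_le (Z, s) zs ->
  closed_walk (restr [predC A] (hrel G S a zs.2 zs.1)) x c -> has [in Z] (x :: c) ->
  odd (maxprio G (x :: c)) = a.
Proof.
move=> inv le cw /hasP[y yc yZ].
have fwd u v : restr [predC A] (hrel G S a zs.2 zs.1) u v -> u \in Z -> hrel G S a s Z u v.
  by case/and3P=> uA _ huv uZ; apply: attr_inv_hrel inv le uZ uA huv.
have inZ : all [in Z] (x :: c).
  apply: (closed_walk_all (Q := predT)) cw _ yc yZ; last by rewrite all_predT.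
  by move=> u v huv _ _ /(fwd _ _ huv) /hrel_in /andP[].
case: inv => _ _ _ _; apply; apply: sub_in_closed_walk inZ cw => u v uZ _ huv.
by case/and3P: (huv) => uA vA _; apply/and3P; split=> //; apply: fwd.
Qed.

Lemma std_step_inv S a A zs : attr_inv S a A zs ->
  attr_inv S a A (std_step G sel S a zs) /\ attr_le zs (std_step G sel S a zs).
Proof.
case: zs => Z s inv; have [[AZ ZS] I2 I3 I4 I5] := inv.
rewrite /std_step; set N := [set v in S | _]; set s2 := fun v => _.
have le : attr_le (Z, s) (Z :|: N, s2).
  by split=> [|v w /= E]; [exact: subsetUl | rewrite /s2 E].
have s2P v w : s2 v = Some w -> s v = Some w \/
    [/\ owner G v = a, v \in Z :|: N & w \in succ_in G S Z v].
  rewrite /s2; case: (s v) => [u|]; first by left.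
  by case: ifP => // /andP[/andP[/eqP oa vZ] ne] [<-]; right; split=> //; apply: sel_in.
have NP v : v \in N -> v \in S /\ (if owner G v == a then succ_in G S Z v != set0
                     else [forall w in S, edge G v w ==> (w \in Z)]).
  by rewrite inE => /andP[].
split=> //; split.
- split; first exact: subset_trans AZ (subsetUl _ _).
  by rewrite subUset ZS; apply/subsetP => v /NP[].
- move=> v w /s2P [/I2[vZ oa e wZ]|[oa vZ]]; first by rewrite !inE vZ wZ.
  by move=> /setIdP[wS /andP[e wZ]]; split=> //; rewrite inE wZ.
- move=> v vZN vA oa; rewrite /s2; case E: (s v) => [u|] //.
  case/setUP: (vZN) => [vZ|/NP[_]]; first by have := I3 v vZ vA oa; rewrite E.
  by rewrite oa eqxx vZN => ->.
- move=> v w vZN vA oa wS e; rewrite inE; case/setUP: vZN => [vZ|/NP[_]].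
    by rewrite (I4 v w).
  by rewrite (negbTE oa) => /forall_inP/(_ w wS); rewrite e /= => ->.
move=> x c cw; case: (boolP (has [in Z] (x :: c))) => [|nZ].
  exact: attr_inv_cycle_old inv le cw.
case/and3P: (cw); case: c cw nZ => [|y c] // _ /=; rewrite !negb_or => /andP[xZ /andP[yZ _]].
move=> _ /andP[/and3P[_ _ /and3P[xZN _]]] + _ _.
case: ifP => [/eqP oa /eqP /s2P [/I2[]|[_ _]]|oa /andP[e yS]]; first by rewrite (negbTE xZ).
  by rewrite inE (negbTE yZ) !andbF.
case/setUP: xZN => [|/NP[_]]; first by rewrite (negbTE xZ).
by rewrite oa => /forall_inP/(_ y yS); rewrite e (negbTE yZ).
Qed.

Lemma add_tangle_inv S a A Z s t :
  attr_inv S a A (Z, s) -> is_tangle t -> tparity G t = a -> tverts t \subset S ->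
  escapes G S t \subset Z ->
  attr_inv S a A (Z :|: tverts t, fun v => if s v is Some w then Some w else
                    if (v \in tverts t) && (owner G v == a) then tstrat t v else None).
Proof.
move=> inv [_ T1 T2 T3] ta tS eZ; have [[AZ ZS] I2 I3 I4 I5] := inv.
set s2 := fun v => _.
have le : attr_le (Z, s) (Z :|: tverts t, s2).
  by split=> [|v w /= E]; [exact: subsetUl | rewrite /s2 E].
have s2P v w : s2 v = Some w -> s v = Some w \/
    [/\ v \in tverts t, owner G v = a & tstrat t v = Some w].
  rewrite /s2; case: (s v) => [u|]; first by left.
  by case: ifP => // /andP[vt /eqP oa] E; right.
split.
- split; first exact: subset_trans AZ (subsetUl _ _).
  by rewrite subUset ZS tS.
- move=> v w /s2P [/I2[vZ oa e wZ]|[vt oa /T1[_ _ e wt]]].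
    by rewrite !inE vZ wZ.
  by rewrite !inE vt wt !orbT.
- move=> v vZt vA oa; rewrite /s2; case E: (s v) => [u|] //.
  case/setUP: (vZt) => [vZ|vt]; first by have := I3 v vZ vA oa; rewrite E.
  by rewrite vt oa eqxx /=; apply: T2 => //; rewrite oa ta.
- move=> v w vZt vA oa wS e; rewrite inE; case/setUP: vZt => [vZ|vt].
    by rewrite (I4 v w).
  case: (boolP (w \in tverts t)) => wt; first by rewrite orbT.
  rewrite (subsetP eZ) // inE wS wt; apply/existsP; exists v.
  by rewrite vt e ta andbT; case: (owner G v) (a) oa => -[].
move=> x c cw; case: (boolP (has [in Z] (x :: c))) => [|nZ].
  exact: attr_inv_cycle_old inv le cw.
have inZt : all [in Z :|: tverts t] (x :: c).
  by apply: closed_walk_in cw => u v /and3P[_ _ /hrel_in].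
have intZ : all [pred v | (v \in tverts t) && (v \notin Z)] (x :: c).
  rewrite -all_predC in nZ; apply/allP => v vc; move: (allP nZ v vc) (allP inZt v vc).
  by rewrite /= inE => /negbTE -> /= ->.
rewrite -ta; apply: T3; apply: sub_in_closed_walk intZ cw.
move=> u v /andP[ut uZ] /andP[vt _] /and3P[_ _ /and3P[_ _]].
rewrite /tangle_rel ut vt ta /=.
case: ifP => [/eqP oa /eqP /s2P [/I2[uZ' _ _ _]|[_ _ ->]] | _ /andP[]] //.
by rewrite uZ' in uZ.
Qed.

Lemma tangle_step_inv S a A T zs : tangles_ok T a -> attr_inv S a A zs ->
  [/\ attr_inv S a A (tangle_step G S a T zs), attr_le zs (tangle_step G S a T zs) &
      forall t, List.In t T -> tparity G t = a -> tverts t \subset S ->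
        escapes G S t != set0 -> escapes G S t \subset zs.1 ->
        tverts t \subset (tangle_step G S a T zs).1].
Proof.
elim: T zs => [|t T IH] zs okT inv; first by split=> //; apply: attr_le_refl.
have okT' : tangles_ok T a by move=> u Tu; apply: okT; right.
case: zs inv => Z s inv; rewrite /tangle_step /=; case: ifP => cond.
- case/and5P: (cond) => /eqP ta tS _ _ eZ.
  have inv2 := add_tangle_inv inv (okT t (or_introl erefl) ta) ta tS eZ.
  have [inv' le' grown] := IH _ okT' inv2; split=> //.
    by apply: attr_le_trans le'; split=> [|v w /= ->] //; apply: subsetUl.
  move=> u [<-|Tu] ua uS ne ueZ; first exact: subset_trans (subsetUr _ _) le'.1.
  by apply: grown => //; apply: subset_trans ueZ (subsetUl _ _).
- have [inv' le' grown] := IH _ okT' inv; split=> // u [<-|Tu] ua uS ne ueZ.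
    move: cond; rewrite ua eqxx uS ne ueZ /= andbT => /negbFE tZ.
    exact: subset_trans tZ le'.1.
  exact: grown.
Qed.

Lemma tangle_step_id S a T zs :
  (forall t, List.In t T -> ~~ [&& tparity G t == a, tverts t \subset S,
     ~~ (tverts t \subset zs.1), escapes G S t != set0 & escapes G S t \subset zs.1]) ->
  tangle_step G S a T zs = zs.
Proof.
elim: T zs => [|t T IH] [Z s] //= fire; rewrite /tangle_step /=.
by rewrite (negbTE (fire t (or_introl erefl))); apply: IH => u Tu; apply: fire; right.
Qed.

Definition attr_step S a T (zs : {set V} * strat V) : {set V} * strat V :=
  tangle_step G S a T (std_step G sel S a zs).

Lemma attr_step_inv S a A T zs : tangles_ok T a -> attr_inv S a A zs ->
  attr_inv S a A (attr_step S a T zs) /\ attr_le zs (attr_step S a T zs).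
Proof.
move=> okT /std_step_inv[inv1 le1]; have [inv2 le2 _] := tangle_step_inv okT inv1.
by split=> //; apply: attr_le_trans le2.
Qed.

Lemma attr_step_closed S a A T zs : tangles_ok T a -> attr_inv S a A zs ->
  (attr_step S a T zs).1 = zs.1 -> attr_closed S a T (attr_step S a T zs).
Proof.
case: zs => Z s okT /std_step_inv[inv1 [sub1 le1]].
have [_ [sub2 le2] grown] := tangle_step_inv okT inv1.
rewrite /attr_step; case: (tangle_step _ _ _ _ _) sub2 le2 grown => Z2 s2 /= sub2 le2 grown E.
subst Z2; have E1 : (std_step G sel S a (Z, s)).1 = Z.
  by apply/eqP; rewrite eqEsubset sub1 sub2.
have std v : v \in S -> (if owner G v == a then succ_in G S Z v != set0
                         else [forall w in S, edge G v w ==> (w \in Z)]) ->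
    v \in Z /\ (owner G v = a -> s2 v != None).
  move=> vS Hv; have vZ1 : v \in (std_step G sel S a (Z, s)).1 by apply/setUP; right; apply/setIdP.
  split=> [|oa]; first by rewrite -E1.
  have [w Ew] : exists w, (std_step G sel S a (Z, s)).2 v = Some w.
    rewrite /=; case: (s v) => [w|]; first by exists w.
    by move: Hv; rewrite oa eqxx -/(std_step G sel S a (Z, s)).1 vZ1 => ->; eexists.
  by rewrite (le2 _ _ Ew).
split.
- move=> v vS oa ne; have := std v vS; rewrite oa eqxx => /(_ ne) [vZ ns].
  by split=> //; apply: ns.
- by move=> v vS oa fa; have := std v vS; rewrite (negbTE oa) => /(_ fa) [].
- by move=> t Tt ta tS ne eZ; apply: grown => //; apply: subset_trans eZ (subsetUl _ _).
Qed.

Lemma attr_closed_fixed S a T zs : attr_closed S a T zs -> (attr_step S a T zs).1 = zs.1.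
Proof.
case: zs => Z s [F1 F2 F3]; rewrite /attr_step /std_step; set N := [set v in S | _].
have -> : Z :|: N = Z.
  apply/setUidPl/subsetP => v; rewrite inE => /andP[vS].
  case: ifP => [/eqP oa ne|/negbT oa]; [by case: (F1 v vS oa ne) | exact: F2].
rewrite tangle_step_id // => t Tt; apply/negP => /and5P[/eqP ta tS ntZ ne eZ].
by move: ntZ; rewrite (F3 t Tt ta tS ne eZ).
Qed.

Lemma tattr_spec S a A T : A \subset S -> tangles_ok T a ->
  attr_inv S a A (tattr G sel S a T A) /\ attr_closed S a T (tattr G sel S a T A).
Proof.
move=> AS okT.
change (tattr G sel S a T A) with (iter #|V|.+2 (attr_step S a T) (A, fun _ => None)).
split.
  elim: #|V|.+2 => [|k IH]; [exact: attr_inv_init | exact: (attr_step_inv okT IH).1].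
apply: (@iter_grow_fixpoint V _ _ fst (attr_inv S a A)) => //.
- exact: attr_inv_init.
- by move=> zs /(attr_step_inv okT) [? []].
- by move=> zs inv E; apply: attr_step_closed inv E.
- by move=> zs _; apply: attr_closed_fixed.
Qed.

End Attractor.

Section Extract.
Variables (V : finType) (G : game V).
Implicit Types (S Y Z : {set V}) (a : bool) (s : strat V) (h : rel V).

Definition scc h v : {set V} := [set w | connect h v w && connect h w v].

Lemma scc_closed h v u w :
  (forall w, connect h v w -> connect h w v) -> u \in scc h v -> h u w -> w \in scc h v.
Proof.
move=> bot; rewrite !inE => /andP[vu _] huw.
have vw : connect h v w := connect_trans vu (connect1 huw).
by rewrite vw bot.
Qed.

(* The top vertex of a bottom component lies on a cycle through an internal edge. *)
Lemma scc_parity h a v :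
  cycles_won G h a -> (forall w, connect h v w -> connect h w v) ->
  [exists x in scc h v, exists y in scc h v, h x y] -> odd (prmax G (scc h v)) = a.
Proof.
move=> won bot /exists_inP[x xC /exists_inP[y yC hxy]].
have [m mC Em] : {m | m \in scc h v & \max_(u in scc h v) prio G u = prio G m}.
  by apply: eq_bigmax_cond; apply/card_gt0P; exists x.
have /connectP[p1 pp1 E1] : connect h m x.
  by move: mC xC; rewrite !inE => /andP[_ mv] /andP[vx _]; apply: connect_trans mv vx.
have /connectP[p2 pp2 E2] : connect h y m.
  by move: mC yC; rewrite !inE => /andP[vm _] /andP[_ yv]; apply: connect_trans yv vm.
have cw : closed_walk h m (p1 ++ y :: p2).
  rewrite /closed_walk cat_path last_cat /= -E1 -E2 hxy pp1 pp2 eqxx.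
  by case: p1 {pp1 E1}.
have inC : all [in scc h v] (m :: p1 ++ y :: p2).
  apply: (closed_walk_all (Q := predT)) cw _ (mem_head _ _) mC; last by rewrite all_predT.
  by move=> u w huw _ _ uC; apply: scc_closed huw.
rewrite /prmax Em -(won _ _ cw); congr odd; apply/eqP; rewrite eqn_leq.
rewrite maxprio_ub ?mem_head //=; apply: maxprio_lub => w /(allP inC) wC.
by rewrite -Em; apply: leq_bigmax_cond.
Qed.

Lemma Yz_spec S a Z s : let Y := Yz G S a Z s in
  [/\ Y \subset Z,
      forall v, v \in Y -> owner G v = a -> exists2 w, s v = Some w & w \in Y &
      forall v w, v \in Y -> owner G v != a -> w \in S -> edge G v w -> w \in Y].
Proof.
move=> Y; have shrink X : ystep G S a s X \subset X.
  by apply/subsetP => v; rewrite inE => /andP[].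
have [YZ fixY] : Y \subset Z /\ ystep G S a s Y = Y.
  split.
    rewrite /Y /Yz; elim: #|V|.+1 => [|k IH]; [exact: subxx | exact: subset_trans (shrink _) IH].
  apply: (@iter_grow_fixpoint V _ _ (fun X => ~: X) (fun _ => True)
            (fun X => ystep G S a s X = X)) => // X _.
  - by rewrite setCS.
  - by move/setC_inj => E; rewrite !E.
  - by move=> ->.
split=> // [v vY oa|v w vY oa wS e].
  move: vY; rewrite -{1}fixY inE oa eqxx => /andP[_].
  by case: (s v) => // w wY; exists w.
by move: vY; rewrite -{1}fixY inE (negbTE oa) => /andP[_ /forall_inP/(_ w wS)]; rewrite e.
Qed.

Lemma hrelS S a s Y Z : Y \subset Z -> subrel (hrel G S a s Y) (hrel G S a s Z).
Proof. by move=> YZ u w /and3P[uY wY c]; rewrite /hrel !(subsetP YZ) ?c. Qed.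

Lemma extract_tangles S a Z s : Z \subset S ->
  (forall v w, s v = Some w -> owner G v = a /\ edge G v w) ->
  cycles_won G (hrel G S a s Z) a ->
  forall t, List.In t (extract G S a Z s) ->
  [/\ is_tangle G t, tverts t \subset Z, tparity G t = a & escapes G S t = set0].
Proof.
move=> ZS sok won t; rewrite /extract; cbv zeta => /= tA; have [C] := In_map_mem tA.
rewrite mem_undup => /mapP[v].
rewrite mem_filter mem_enum => /andP[/andP[/forallP bot exy] vY] -> ->.
have [YZ Ya Yo] := Yz_spec S a Z s; set Y := Yz G S a Z s in vY YZ Ya Yo bot exy *.
set h := hrel G S a s Y in bot exy *.
have {}bot w : connect h v w -> connect h w v := implyP (bot w).
have CY : scc h v \subset Y.
  apply/subsetP => w; rewrite inE => /andP[/connectP[p pp ->] _].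
  apply: (path_last_forward (Q := predT)) pp _ (mem_head _ _) vY; last by rewrite all_predT.
  by move=> u w' /hrel_in /andP[].
have ta : odd (prmax G (scc h v)) = a := scc_parity (sub_cycles_won (hrelS YZ) won) bot exy.
have Cin u : u \in scc h v -> u \in Y := subsetP CY u.
split=> //; last first.
- apply/eqP; rewrite -subset0; apply/subsetP => w.
  rewrite inE /tparity /= ta => /andP[wS /andP[wC /exists_inP[u uC /andP[/eqP ou e]]]].
  have oa : owner G u != a by rewrite ou; case: (a).
  have uY := Cin u uC; have wY := Yo u w uY oa wS e.
  have huw : h u w by rewrite /h /hrel uY wY (negbTE oa) e wS.
  by rewrite (scc_closed bot uC huw) in wC.
- exact: subset_trans CY YZ.
rewrite /is_tangle /tparity /= ta; split.
- by apply/set0Pn; exists v; rewrite inE connect0.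
- move=> u w; case: ifP => // uC E; have [oa e] := sok _ _ E; split=> //.
  have [w' E' w'Y] := Ya u (Cin u uC) oa; move: E; rewrite E' => -[<-].
  by apply: (scc_closed bot uC); rewrite /h /hrel (Cin u uC) w'Y oa E' !eqxx.
- by move=> u uC oa; rewrite uC; have [w' -> _] := Ya u (Cin u uC) oa.
apply: sub_cycles_won (sub_cycles_won (hrelS YZ) won) => u w.
rewrite /tangle_rel /tparity /= ta /h /hrel => /and3P[uC wC]; rewrite uC !Cin //=.
by case: ifP => // _ ->; rewrite (subsetP ZS) // (subsetP YZ) // Cin.
Qed.

Lemma bottom_exists h S v0 : v0 \in S -> (forall u w, u \in S -> connect h u w -> w \in S) ->
  exists2 v, v \in S & forall w, connect h v w -> connect h w v.
Proof.
move=> v0S closed; pose reach u := [set w | connect h u w].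
case: (arg_minnP (fun u => #|reach u|) v0S) => v vS vmin; exists v => // w cvw.
have sub : reach w \subset reach v.
  by apply/subsetP => u; rewrite !inE; apply: connect_trans cvw.
have Ec : #|reach w| = #|reach v|.
  by apply/eqP; rewrite eqn_leq subset_leq_card //=; apply: vmin; apply: closed cvw.
by have := (subset_cardP Ec sub) v; rewrite !inE connect0.
Qed.

Lemma extract_nonempty S a s : S != set0 ->
  (forall v, v \in S -> exists2 w, w \in S & edge G v w) ->
  (forall v, v \in S -> owner G v = a -> exists2 w, s v = Some w & w \in S) ->
  extract G S a S s <> [::].
Proof.
move=> /set0Pn[v0 v0S] total strat.
have YS : Yz G S a S s = S.
  have fixS : ystep G S a s S = S.
    apply/setP => v; rewrite inE andb_idr // => vS.
    case: ifP => [/eqP oa|_]; first by have [w -> ->] := strat v vS oa.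
    by apply/forall_inP => w wS; rewrite wS implybT.
  by rewrite /Yz; elim: #|V|.+1 => //= n ->.
rewrite /extract; cbv zeta; rewrite YS; set h := hrel G S a s S; set cs := undup _.
have hsucc v : v \in S -> exists2 w, w \in S & h v w.
  move=> vS; case: (eqVneq (owner G v) a) => oa.
    by have [w E wS] := strat v vS oa; exists w; rewrite // /h /hrel vS wS oa E !eqxx.
  by have [w wS e] := total v vS; exists w; rewrite // /h /hrel vS wS (negbTE oa) e.
have closed u w : u \in S -> connect h u w -> w \in S.
  move=> uS /connectP[p pp ->].
  apply: (path_last_forward (Q := predT)) pp _ (mem_head _ _) uS; last by rewrite all_predT.
  by move=> x y /hrel_in /andP[].
have [v vS bot] := bottom_exists v0S closed; have [y yS hvy] := hsucc v vS.
suff : scc h v \in cs by case: cs.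
rewrite mem_undup; apply/mapP; exists v => //.
rewrite mem_filter mem_enum vS andbT; apply/andP; split.
  by apply/forallP => w; apply/implyP; apply: bot.
apply/exists_inP; exists v; first by rewrite inE connect0.
by apply/exists_inP; exists y; rewrite // inE connect1 // bot // connect1.
Qed.

End Extract.

Section Search.
Variables (V : finType) (G : game V) (sel : {set V} -> V).
Hypothesis sel_in : forall A : {set V}, A != set0 -> sel A \in A.
Implicit Types (S R Z : {set V}) (a : bool) (s : strat V) (t : tangle V) (T : seq (tangle V))
  (zs : {set V} * strat V).

Definition all_tangles T : Prop := forall t, List.In t T -> is_tangle G t.

Definition is_dominion S t : Prop :=
  [/\ is_tangle G t, tverts t \subset S & escapes G S t = set0].

Definition total_in S : Prop := forall v, v \in S -> exists2 w, w \in S & edge G v w.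

(* The tangle rule would not pull any recorded tangle of [S :\: R] into [R]. *)
Definition unattracted S T R : Prop :=
  forall t, List.In t T -> tverts t \subset S :\: R -> tverts t != set0 ->
    escapes G S t != set0 -> escapes G S t \subset R -> False.

Definition tangle_sets T : {set {set V}} := [set C | has (fun t => tverts t == C) T].

Definition top_vertices S : {set V} := [set v in S | prio G v == prmax G S].

Lemma mem_tangle_sets T t : List.In t T -> tverts t \in tangle_sets T.
Proof.
by move=> tT; rewrite inE; apply: (proj2 (List.existsb_exists _ _)); exists t; rewrite eqxx.
Qed.

Lemma escapes_eq S t1 t2 : tverts t1 = tverts t2 -> escapes G S t1 = escapes G S t2.
Proof. by move=> E; rewrite /escapes /tparity E. Qed.

Lemma mem_escapes_sub S S' t w : S' \subset S ->
  (w \in escapes G S' t) = (w \in S') && (w \in escapes G S t).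
Proof.
by move=> sub; rewrite !inE; case wS': (w \in S') => //=; rewrite (subsetP sub w wS').
Qed.

Lemma total_in_setD S Z a : total_in S -> Z \subset S ->
  (forall v, v \in S -> owner G v = a -> succ_in G S Z v != set0 -> v \in Z) ->
  (forall v, v \in S -> owner G v != a -> [forall w in S, edge G v w ==> (w \in Z)] ->
     v \in Z) ->
  total_in (S :\: Z).
Proof.
move=> tot ZS F1 F2 v /setDP[vS vZ]; case: (eqVneq (owner G v) a) => oa.
  have [w wS e] := tot v vS; exists w => //; rewrite inE wS andbT.
  by apply: contra vZ => wZ; apply: F1 => //; apply/set0Pn; exists w; rewrite inE wS e.
have : ~~ [forall w in S, edge G v w ==> (w \in Z)] by apply: contra vZ; apply: F2.
rewrite negb_forall_in => /exists_inP[w wS]; rewrite negb_imply => /andP[e wZ].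
by exists w; rewrite // inE wS wZ.
Qed.

(* An escape of a recorded tangle into the attracted region [Z] would have let
   [Z] absorb either the whole tangle (same parity) or the vertex it escapes
   from (opposite parity). *)
Lemma unattracted_setU S T R a Z s :
  unattracted S T R -> R \subset S -> Z \subset S :\: R ->
  attr_closed G (S :\: R) a [seq t <- T | tverts t \subset S :\: R] (Z, s) ->
  unattracted S T (R :|: Z).
Proof.
move=> un RS ZS' [F1 _ F3] t tT tS ne ene eRZ.
have tS' : tverts t \subset S :\: R.
  by apply: subset_trans tS _; rewrite setDUr subsetIl.
have tZ v : v \in tverts t -> v \notin Z.
  by move/(subsetP tS); rewrite !inE negb_or => /andP[/andP[_ ->]].
case: (boolP [exists w in escapes G S t, w \in Z]) => [/exists_inP[e eE eZ]|nE]; last first.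
  apply: (un t tT tS' ne ene); apply/subsetP => w wE.
  move: (subsetP eRZ w wE); rewrite inE => /orP[//|wZ].
  by move: nE; rewrite negb_exists_in => /forall_inP/(_ w wE); rewrite wZ.
have eS' : e \in S :\: R := subsetP ZS' e eZ.
case: (eqVneq (tparity G t) a) => ta.
  have tT' : List.In t [seq t <- T | tverts t \subset S :\: R].
    by apply/List.filter_In; split.
  have eS : escapes G (S :\: R) t \subset Z.
    apply/subsetP => w; rewrite (mem_escapes_sub _ _ (subsetDl S R)) => /andP[wS' wE].
    by move: (subsetP eRZ w wE) wS'; rewrite !inE => /orP[->|].
  have ene' : escapes G (S :\: R) t != set0.
    by apply/set0Pn; exists e; rewrite (mem_escapes_sub _ _ (subsetDl S R)) eS' eE.
  case/set0Pn: ne => v vt; have := subsetP (F3 t tT' ta tS' ene' eS) v vt.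
  by rewrite (negbTE (tZ v vt)).
move: eE; rewrite inE => /andP[_ /andP[_ /exists_inP[u ut /andP[/eqP ou e_]]]].
have ua : owner G u = a by rewrite ou; move: ta; case: (tparity G t); case: (a).
have succ : succ_in G (S :\: R) Z u != set0 by apply/set0Pn; exists e; rewrite inE eS' e_ eZ.
have [uZ _] := F1 u (subsetP tS' u ut) ua succ.
by rewrite (negbTE (tZ u ut)) in uZ.
Qed.

Lemma top_vertices_nonempty S : S != set0 -> top_vertices S != set0.
Proof.
move=> /set0Pn[v vS]; have [m mS Em] : {m | m \in S & \max_(u in S) prio G u = prio G m}.
  by apply: eq_bigmax_cond; apply/card_gt0P; exists v.
by apply/set0Pn; exists m; rewrite inE mS /prmax Em eqxx.
Qed.

(* Every cycle through a top vertex has the top priority, and the others are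
   controlled by the attractor invariant. *)
Lemma top_attr_spec S T zs : all_tangles T ->
  tattr G sel S (odd (prmax G S)) [seq t <- T | tverts t \subset S] (top_vertices S) = zs ->
  [/\ attr_inv G S (odd (prmax G S)) (top_vertices S) zs,
      attr_closed G S (odd (prmax G S)) [seq t <- T | tverts t \subset S] zs &
      cycles_won G (hrel G S (odd (prmax G S)) zs.2 zs.1) (odd (prmax G S))].
Proof.
move=> allT <-; set p := prmax G S; set A := top_vertices S.
have AS : A \subset S by apply/subsetP => v; rewrite inE => /andP[].
have okT : tangles_ok G [seq t <- T | tverts t \subset S] (odd p).
  by move=> t /List.filter_In[tT _] _; apply: allT.
have [inv cl] := tattr_spec sel_in AS okT; split=> //.
case: (tattr _ _ _ _ _ _) inv => Z s inv; have [[_ ZS] _ _ _ won] := inv.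
move=> x c cw; case: (boolP (all [predC A] (x :: c))) => [allA|].
  exact: won _ _ (closed_walk_restr allA cw).
rewrite -has_predC => /hasP[v vc]; rewrite /= negbK inE => /andP[vS /eqP pv].
congr odd; apply/eqP; rewrite eqn_leq; apply/andP; split; last by rewrite /p -pv maxprio_ub.
have inZ : all [in Z] (x :: c) by apply: closed_walk_in cw => u w /hrel_in.
by apply: maxprio_lub => w /(allP inZ) /(subsetP ZS) wS; apply: leq_bigmax_cond.
Qed.

Lemma fresh_tangle S R T t : unattracted S T R -> is_tangle G t ->
  tverts t \subset S :\: R -> escapes G (S :\: R) t = set0 -> escapes G S t != set0 ->
  tverts t \notin tangle_sets T.
Proof.
move=> un [tne _ _ _] tS esc' ene; apply/negP; rewrite inE.
case/(List.existsb_exists _ _) => t' [t'T /eqP E].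
apply: (un t' t'T); rewrite ?E ?(escapes_eq S E) //.
apply/subsetP => w wE; apply: contraT => wR.
have : w \in escapes G (S :\: R) t.
  rewrite (mem_escapes_sub _ _ (subsetDl S R)) wE andbT inE wR.
  by move: wE; rewrite inE => /andP[].
by rewrite esc' inE.
Qed.

Lemma card_setD_top_attr S R Z : S :\: R != set0 -> top_vertices (S :\: R) \subset Z ->
  #|S :\: (R :|: Z)| < #|S :\: R|.
Proof.
move=> ne topZ; have [v vtop] := set0Pn _ (top_vertices_nonempty ne).
apply: proper_card; rewrite -setDDl properE subsetDl; apply/subsetPn; exists v.
  by move: vtop; rewrite inE => /andP[].
by rewrite inE (subsetP topZ v vtop).
Qed.

Lemma extract_attr_nonempty S a A T s : S != set0 -> total_in S ->
  attr_inv G S a A (S, s) -> attr_closed G S a T (S, s) -> extract G S a S s <> [::].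
Proof.
move=> ne tot [_ sok _ _ _] [F1 _ _]; apply: extract_nonempty => // v vS oa.
have [w wS e] := tot v vS.
have succ : succ_in G S S v != set0 by apply/set0Pn; exists w; rewrite inE wS e.
case: (F1 v vS oa succ) => _; case E: (s v) => [u|] // _.
by exists u => //; case: (sok _ _ E).
Qed.

Definition inner_spec S T (r : sres V) : Prop :=
  match r with
  | Defs.Found T' d => all_tangles T' /\ is_dominion S d
  | Defs.Done Y =>
      Y <> [::] /\ forall t, List.In t Y -> is_tangle G t /\ tverts t \notin tangle_sets T
  end.

Lemma inner_ok S T : all_tangles T -> forall n R Y,
  #|S :\: R| < n -> R \subset S -> unattracted S T R -> total_in (S :\: R) ->
  (forall t, List.In t Y -> is_tangle G t /\ tverts t \notin tangle_sets T) ->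
  (R = S -> Y <> [::]) ->
  exists2 r, inner G sel S n T R Y = Some r & inner_spec S T r.
Proof.
move=> allT; elim=> [|n IH] R Y // Hn RS un tot newY doneY /=.
case: eqP => [S'0|/eqP S'ne].
  exists (Defs.Done Y) => //; split=> //; apply: doneY.
  apply/eqP; rewrite eqEsubset RS /=; apply/subsetP => v vS.
  by apply: contraT => vR; move/setP/(_ v): S'0; rewrite !inE vR vS.
rewrite -/(top_vertices (S :\: R)); set S' := S :\: R; set a := odd (prmax G S').
case Ez: (tattr _ _ _ _ _ _) => [Z s]; have [inv cl won] := top_attr_spec allT Ez.
have [[topZ ZS'] sok _ _ _] := inv; have [F1 F2 _] := cl.
have sok' v w : s v = Some w -> owner G v = a /\ edge G v w by case/sok.
have ext := extract_tangles ZS' sok' won; set A := extract G S' a Z s in ext *.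
case Ef: [seq t <- A | escapes G S t == set0] => [|d ds]; last first.
  have /List.filter_In[dA /eqP esc] : List.In d [seq t <- A | escapes G S t == set0].
    by rewrite Ef; left.
  have [dt dZ _ _] := ext d dA; exists (Defs.Found (T ++ Y) d) => //; split.
    by move=> t /List.in_app_iff[/allT|/newY[]].
  by split=> //; apply: subset_trans dZ (subset_trans ZS' (subsetDl _ _)).
have escA t : List.In t A -> escapes G S t != set0.
  move=> tA; apply/negP => /eqP esc.
  have : List.In t [seq t <- A | escapes G S t == set0].
    by apply/List.filter_In; split; rewrite // esc eqxx.
  by rewrite Ef.
apply: IH.
- by move: (card_setD_top_attr S'ne topZ); rewrite -/S' in Hn *; lia.
- by rewrite subUset RS (subset_trans ZS' (subsetDl _ _)).
- exact: unattracted_setU un RS ZS' cl.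
- rewrite -setDDl; apply: (total_in_setD tot ZS') F2 => v vS oa ne.
  by case: (F1 v vS oa ne).
- move=> t /List.in_app_iff[/newY//|tA]; have [tt tZ _ esc'] := ext t tA; split=> //.
  exact: fresh_tangle un tt (subset_trans tZ ZS') esc' (escA t tA).
move=> RZS; have ZS : Z = S'.
  apply/eqP; rewrite eqEsubset ZS'; apply/subsetP => v /setDP[vS vR].
  by move: vS; rewrite -RZS inE (negbTE vR).
have : A <> [::].
  by move: inv cl; rewrite /A ZS; apply: extract_attr_nonempty.
by case: (A) => // t A' _; case: (Y).
Qed.

(* Each unsuccessful round adds a tangle whose vertex set is new, so there are
   at most [#|{set V}|] of them. *)
Lemma search_ok S : S != set0 -> total_in S -> forall n T, all_tangles T ->
  #|{set V}| - #|tangle_sets T| + #|V| < n ->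
  exists T' d, search G sel n S T = Some (T', d) /\ all_tangles T' /\ is_dominion S d.
Proof.
move=> Sne tot; elim=> [|n IH] T allT Hn //.
have [r Er spec] : exists2 r, inner G sel S n.+1 T set0 [::] = Some r & inner_spec S T r.
  apply: inner_ok; rewrite ?setD0 ?sub0set //.
  - by have := max_card S; lia.
  - by move=> t _ _ _ ene; rewrite subset0 (negbTE ene).
  - by move=> S0; move: Sne; rewrite -S0 eqxx.
cbn -[inner]; rewrite Er; case: r Er spec => [T' d|Y] _ /= [].
  by move=> ? ?; exists T', d.
case: Y => // t Y _ newY; apply: IH.
  by move=> u /List.in_app_iff[/allT|/newY[]].
have sub : tangle_sets T \subset tangle_sets (T ++ t :: Y).
  by apply/subsetP => C; rewrite !inE has_cat => ->.
have : tangle_sets T \proper tangle_sets (T ++ t :: Y).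
  rewrite properE sub; apply/subsetPn; exists (tverts t); last by case: (newY t (or_introl erefl)).
  by apply: mem_tangle_sets; apply/List.in_app_iff; right; left.
move/proper_card => lt; have := max_card (tangle_sets (T ++ t :: Y)); move: Hn lt.
by set K := #|{set V}|; lia.
Qed.

End Search.

Section Solve.
Variables (V : finType) (G : game V) (sel : {set V} -> V).
Hypothesis sel_in : forall A : {set V}, A != set0 -> sel A \in A.
Implicit Types (S D : {set V}) (a : bool) (s : strat V) (d t : tangle V) (T : seq (tangle V))
  (W : bool -> {set V}) (sg : bool -> strat V).

Lemma wins_from_sunion a s s' v : wins_from G a s v -> wins_from G a (sunion s s') v.
Proof. by move=> win p pl p0 pc; apply: win => // i w E; apply: pc; rewrite /sunion E. Qed.

(* Once in [tverts d] a play follows the tangle; before that it follows the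
   attractor strategy. *)
Definition attr_rel S a d D s : rel V :=
  [rel x y | tangle_rel G d x y || (x \notin tverts d) && hrel G S a s D x y].

Lemma attr_rel_cycles S a d D s : is_tangle G d -> tparity G d = a ->
  attr_inv G S a (tverts d) (D, s) -> cycles_won G (attr_rel S a d D s) a.
Proof.
move=> [_ _ _ dwon] da [_ _ _ _ Dwon] x c cw.
case: (boolP (has [in tverts d] (x :: c))) => [/hasP[y yc yd]|nd].
  have ind : all [in tverts d] (x :: c).
    apply: (closed_walk_all (Q := predT)) cw _ yc yd; last by rewrite all_predT.
    by move=> u v /orP[/and3P[_ vd _] _ _ _ //|/andP[/negP ud _] _ _ /ud].
  rewrite -da; apply: dwon; apply: sub_in_closed_walk ind cw.
  by move=> u v ud _ /orP[//|/andP[/negP/(_ ud)]].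
rewrite -all_predC in nd; apply: Dwon; apply: (closed_walk_restr nd).
apply: sub_in_closed_walk nd cw => u v ud _ /orP[/and3P[ud' _ _]|/andP[_ //]].
by move: ud; rewrite inE /= ud'.
Qed.

Section DominionAttractor.
Variables (S D : {set V}) (W : bool -> {set V}) (sg : bool -> strat V) (d : tangle V)
  (a : bool) (s : strat V).
Hypothesis da : tparity G d = a.
Hypothesis sgS : forall u, u \in S -> sg a u = None.
Hypothesis exits : forall v w, v \in S -> edge G v w -> w \notin S -> w \in W (~~ owner G v).
Hypothesis dom : is_dominion G S d.
Hypothesis inv : attr_inv G S a (tverts d) (D, s).

Lemma attr_play_step p i : play G p -> consistent (sunion (sg a) (sunion (tstrat d) s)) p ->
  p i \in D ->
  (p i.+1 \notin S /\ p i.+1 \in W a) \/ (p i.+1 \in D /\ attr_rel S a d D s (p i) (p i.+1)).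
Proof.
have [[_ T1 T2 _] dS esc] := dom; have [[dD DS] I2 I3 I4 _] := inv; rewrite da in T1 T2.
move=> pl pc piD; have piS := subsetP DS _ piD; have e := pl i.
have follow w : sunion (tstrat d) s (p i) = Some w -> p i.+1 = w.
  by move=> E; apply: pc; rewrite /sunion sgS.
rewrite /attr_rel /= /tangle_rel da /hrel piD.
case: (eqVneq (owner G (p i)) a) => oa /=.
  case: (boolP (p i \in tverts d)) => pid /=.
    case E: (tstrat d (p i)) (T2 _ pid oa) => [w|] // _.
    have [_ _ _ wd] := T1 _ _ E; rewrite (follow w) /sunion ?E //.
    by right; rewrite wd (subsetP dD) ?eqxx.
  case Es: (s (p i)) (I3 _ piD pid oa) => [w|] // _.
  have Ed : tstrat d (p i) = None.
    by case Et: (tstrat d _) => [w'|] //; case: (T1 _ _ Et) => pd; rewrite pd in pid.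
  have [_ _ _ wD] := I2 _ _ Es; rewrite (follow w) /sunion ?Ed ?Es //.
  by right; rewrite wD eqxx.
case: (boolP (p i.+1 \in S)) => wS; last first.
  have -> : a = ~~ owner G (p i) by move: oa; case: (owner G _); case: (a).
  by left; split=> //; apply: exits.
case: (boolP (p i \in tverts d)) => pid /=.
  have wd : p i.+1 \in tverts d.
    apply: contraT => wd; have : p i.+1 \in escapes G S d.
      rewrite inE wS wd; apply/exists_inP; exists (p i) => //.
      by rewrite e andbT da; move: oa; case: (owner G _); case: (a).
    by rewrite esc inE.
  by right; rewrite wd (subsetP dD) ?e.
by right; rewrite (I4 _ _ piD pid oa wS e) e.
Qed.

Lemma dominion_attr_wins v : (forall u, u \in W a -> wins_from G a (sg a) u) ->
  v \in D -> wins_from G a (sunion (sg a) (sunion (tstrat d) s)) v.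
Proof.
move=> Wwin vD p pl p0 pc; have step i := @attr_play_step p i pl pc.
case: (classic (exists i, p i \notin D)) => [exD|allD].
  case: (ex_minnP exD) => i piD imin.
  have i0 : 0 < i by case: i piD {imin} => //; rewrite p0 vD.
  have prevD : p i.-1 \in D by apply: contraT => /imin; lia.
  have piW : p i \in W a.
    by case: (step _ prevD); rewrite prednK // => -[] //; rewrite (negbTE piD).
  apply: (@won_by_shift _ _ _ p i); apply: (Wwin _ piW).
  - by move=> k /=; rewrite addnS; apply: pl.
  - by rewrite /= addn0.
  - by move=> k w E /=; rewrite addnS; apply: pc; rewrite /sunion E.
have inD i : p i \in D by apply: contraT => piD; case: allD; exists i.
have [[_ DS] _ _ _ _] := inv; have [dt _ _] := dom.
apply: (@won_by_cycles _ _ _ _ _ 0 (attr_rel_cycles dt da inv)) => i _.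
by case: (step i (inD i)) => [[/negP[]]|[]//]; apply: (subsetP DS).
Qed.
End DominionAttractor.

Lemma partition_setD S D W a : D \subset S ->
  (forall v, [|| v \in S, v \in W false | v \in W true]) ->
  (forall b v, v \in W b -> v \notin S) -> (forall v, v \in W false -> v \notin W true) ->
  let W' b := if b == a then W b :|: D else W b in
  [/\ forall v, [|| v \in S :\: D, v \in W' false | v \in W' true],
      forall b v, v \in W' b -> v \notin S :\: D &
      forall v, v \in W' false -> v \notin W' true].
Proof.
move=> DS cover out disj W'.
have W'P b v : v \in W' b -> v \in W b \/ v \in D /\ b = a.
  by rewrite /W'; case: eqP => [->|_]; [case/setUP; [left|right] | left].
split.
- move=> v; rewrite /W'; case/or3P: (cover v) => [vS|vW|vW].
  + case: (boolP (v \in D)) => vD; last by rewrite inE vD vS.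
    by case: (a); rewrite /= !inE vD ?orbT.
  + by case: (a); rewrite /= !inE vW ?orbT.
  + by case: (a); rewrite /= !inE vW ?orbT.
- move=> b v /W'P[vW|[vD _]]; rewrite inE negb_and negbK; first by rewrite (out _ _ vW) orbT.
  by rewrite vD.
move=> v /W'P[v0|[vD fa]]; apply/negP => /W'P[v1|[vD' ta]].
- by move: (disj v v0); rewrite v1.
- by move: (out false v v0); rewrite (subsetP DS v vD').
- by move: (out true v v1); rewrite (subsetP DS v vD).
- by move: fa; rewrite -ta.
Qed.

Record solve_inv S T W sg : Prop := SolveInv {
  inv_cover : forall v, [|| v \in S, v \in W false | v \in W true];
  inv_won_outside : forall b v, v \in W b -> v \notin S;
  inv_won_disjoint : forall v, v \in W false -> v \notin W true;
  inv_strategy : forall b, is_strategy G b (sg b);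
  inv_strategy_dom : forall b v w, sg b v = Some w -> v \in W b;
  inv_exits : forall v w, v \in S -> edge G v w -> w \notin S -> w \in W (~~ owner G v);
  inv_wins : forall b v, v \in W b -> wins_from G b (sg b) v;
  inv_tangles : all_tangles G T;
  inv_total : total_in G S }.

Lemma solve_inv_step S T W sg T' d D s :
  solve_inv S T W sg -> all_tangles G T' -> is_dominion G S d ->
  attr_inv G S (tparity G d) (tverts d) (D, s) ->
  attr_closed G S (tparity G d) [::] (D, s) ->
  solve_inv (S :\: D) [seq t <- T' | tverts t \subset S :\: D]
    (fun b => if b == tparity G d then W b :|: D else W b)
    (fun b => if b == tparity G d then sunion (sg b) (sunion (tstrat d) s) else sg b).
Proof.
set a := tparity G d => [[cover out disj strat sdom exits wins _ tot]] allT' dom inv cl.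
have [[dD DS] I2 _ _ _] := inv; have [[_ T1 _ _] _ _] := dom; have [F1 F2 _] := cl.
have sgS u : u \in S -> sg a u = None.
  by move=> uS; case E: (sg a u) => [w|] //; move: (out _ _ (sdom _ _ _ E)); rewrite uS.
have Wsub b v : v \in W b -> v \in (if b == a then W b :|: D else W b).
  by case: (b == a); rewrite ?inE => ->.
have [cover' out' disj'] := partition_setD a DS cover out disj.
split=> //.
- move=> b; case: eqP => [->|_]; last exact: strat.
  move=> v w; rewrite /sunion; case E: (sg a v) => [u|]; first by move=> [<-]; apply: strat.
  case E': (tstrat d v) => [u|]; first by move=> [<-]; case: (T1 _ _ E').
  by case/I2.
- move=> b v w; case: eqP => [->|_]; last exact: sdom.
  rewrite /sunion inE; case E: (sg a v) => [u|]; first by rewrite (sdom _ _ _ E).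
  case E': (tstrat d v) => [u|]; first by case: (T1 _ _ E') => vd; rewrite (subsetP dD _ vd) orbT.
  by case/I2 => ->; rewrite orbT.
- move=> v w /setDP[vS vD] e wSD.
  case: (boolP (w \in S)) => wS; last by apply: Wsub; apply: exits.
  have wD : w \in D by move: wSD; rewrite inE wS andbT negbK.
  have oa : owner G v != a.
    apply/eqP => oa; move: vD; rewrite (proj1 (F1 v vS oa _)) //.
    by apply/set0Pn; exists w; rewrite inE wS e wD.
  rewrite (_ : ~~ owner G v = a) ?eqxx ?inE ?wD ?orbT //.
  by move: oa; case: (owner G v); case: (a).
- move=> b v; case: eqP => [->|_]; last exact: wins.
  case/setUP => [vW|vD]; first by apply: wins_from_sunion; apply: wins.
  exact: (dominion_attr_wins erefl sgS exits dom inv (wins a)).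
- by move=> t /List.filter_In[/allT' ?].
apply: (total_in_setD tot DS) => [v vS oa ne|]; first by case: (F1 v vS oa ne).
exact: F2.
Qed.

Arguments search : simpl never.

Lemma solve_loop_ok n S T W sg : solve_inv S T W sg -> #|S| + (#|{set V}| + #|V|) < n ->
  exists T' W' sg',
    solve_loop G sel n S T W sg = Some (Result (W' false) (W' true) (sg' false) (sg' true)) /\
    solve_inv set0 T' W' sg'.
Proof.
elim: n S T W sg => [|n IH] S T W sg inv lt //.
rewrite /=; case: eqP => [S0|/eqP Sne]; first by exists T, W, sg; rewrite -S0.
have [T' [d [-> [allT' dom]]]] : exists T' d, search G sel n.+1 S T = Some (T', d) /\
    all_tangles G T' /\ is_dominion G S d.
  by apply: search_ok => //; [exact: inv_total inv | exact: inv_tangles inv | lia].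
have [[dne _ _ _] dS _] := dom.
rewrite /attr; case Ea: (tattr _ _ _ _ _ _) => [D s].
have [ainv acl] : attr_inv G S (tparity G d) (tverts d) (D, s) /\
    attr_closed G S (tparity G d) [::] (D, s) by rewrite -Ea; apply: tattr_spec.
apply: IH; first exact: solve_inv_step inv allT' dom ainv acl.
have : S :\: D \proper S.
  rewrite properE subsetDl /=; have [v vd] := set0Pn _ dne.
  apply/subsetPn; exists v; first exact: subsetP dS v vd.
  by case: ainv => [[dD _]] _ _ _ _; rewrite inE (subsetP dD v vd).
by move/proper_card; lia.
Qed.

End Solve.

Lemma solve_inv_init (V : finType) (G : game V) :
  (forall v : V, exists w : V, edge G v w) ->
  solve_inv G setT [::] (fun _ => set0) (fun _ _ => None).
Proof.
move=> total; split=> //.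
- by move=> v; rewrite inE.
- by move=> b v; rewrite inE.
- by move=> v; rewrite inE.
- by move=> v w _ _; rewrite inE.
- by move=> b v; rewrite inE.
- by move=> v _; have [w e] := total v; exists w; rewrite ?inE.
Qed.

Lemma solve_inv_solution (V : finType) (G : game V) T W sg :
  (forall v : V, exists w : V, edge G v w) -> solve_inv G set0 T W sg ->
  solution G (Result (W false) (W true) (sg false) (sg true)).
Proof.
move=> total [cover _ disj strat _ _ wins _ _].
have inW1 v : v \notin W false -> v \in W true.
  by move: (cover v); rewrite inE /= => /orP[->|->].
split=> /=.
- by apply/setP => v; rewrite !inE; case: (boolP (v \in W false)) => // /inW1.
- by apply/setP => v; rewrite !inE; case: (boolP (v \in W false)) => // /disj /negbTE.
- by split; apply: strat.
- by split=> v; apply: wins.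
split=> v; split=> [vW|[f [sf wf]]].
- by exists (sg false); split=> //; apply: wins.
- apply: contraT => nW.
  by case: (wins_from_both total sf (strat true) wf (wins true v (inW1 v nW))).
- by exists (sg true); split=> //; apply: wins.
- apply: contraT => nW; have vW0 : v \in W false by apply: contraT => /inW1; rewrite (negbTE nW).
  by case: (wins_from_both total (strat false) sf (wins false v vW0) wf).
Qed.

Theorem lemma10 (V : finType) (G : game V) (sel : {set V} -> V)
  (Htotal : forall v : V, exists w : V, edge G v w)
  (Hsel : forall A : {set V}, A != set0 -> sel A \in A) :
  exists (n : nat) (r : result V),
    solve G sel n = Some r /\ solution G r.
Proof.
have [T [W [sg [Er inv]]]] := solve_loop_ok Hsel (solve_inv_init Htotal) (ltnSn _).
exists (#|[set: V]| + (#|{set V}| + #|V|)).+1, (Result (W false) (W true) (sg false) (sg true)).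
by split; [exact: Er | exact: solve_inv_solution Htotal inv].
Qed.
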